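(* Let $P$ be an $n \times n$ partial Latin square with $r$ completely filled columns, one further column in which exactly $s$ cells are filled, and all other columns empty. If $n \geq 2r+s$, then $P$ is completable.
   Context: A partial Latin square of order $n$ is an $n\times n$ array in which each cell is empty or contains one symbol from $\{1,\dots,n\}$, with no symbol occurring twice in a row or column. $P$ is completable if there is an $n\times n$ Latin square (no empty cells) agreeing with $P$ on every nonempty cell of $P$. *)

From mathcomp Require Import all_boot.
Set Implicit Arguments. Unset Strict Implicit. Unset Printing Implicit Defensive.

(* A partial array of order n: cell (i,j) (row i, column j) is empty (None)
   or holds a symbol (Some k), symbols are 'I_n (standing for 1..n). *)
Definition parray (n : nat) := {ffun 'I_n * 'I_n -> option 'I_n}.

Definition is_PLS n (P : parray n) : Prop :=
  (forall i j j' k, P (i, j) = Some k -> P (i, j') = Some k -> j = j') /\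
  (forall i i' j k, P (i, j) = Some k -> P (i', j) = Some k -> i = i').

Definition is_LS n (L : parray n) : Prop :=
  (forall c, L c != None) /\ is_PLS L.

Definition completable n (P : parray n) : Prop :=
  exists L : parray n, is_LS L /\ forall c k, P c = Some k -> L c = Some k.

Definition col_filled n (P : parray n) (j : 'I_n) : nat :=
  #|[set i : 'I_n | P (i, j) != None]|.

From mathcomp Require Import all_boot zify.
Set Implicit Arguments. Unset Strict Implicit. Unset Printing Implicit Defensive.

(* Fill the partial column j0 first, by a matching (Hall's theorem) between
   its empty rows and its missing symbols, row i being adjacent to symbol k
   when k does not occur in row i.  Both sides have n - s elements, and only
   the r full columns create conflicts: each row misses at most r of the
   symbols and each symbol occurs in at most r rows.  As 2r <= n - s, a set X
   of rows is either small enough to be covered by the neighbours of any one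
   of its rows or large enough to meet the neighbours of every symbol, so
   Hall's condition holds.  What remains is a Latin rectangle with r + 1 full
   columns; it is completed one empty column at a time, since when c columns
   are full every row lacks exactly n - c symbols and every symbol is missing
   from exactly n - c rows, and a regular bipartite graph satisfies Hall's
   condition by double counting. *)

Section Hall.
Variables (TA TB : finType) (adj : TA -> TB -> bool).
Implicit Types (A X Y : {set TA}) (B : {set TB}).

Definition nbhd B X := [set b in B | [exists a in X, adj a b]].

Definition hall_cond A B := forall X, X \subset A -> #|X| <= #|nbhd B X|.

Definition matching (f : TA -> TB) A B :=
  {in A &, injective f} /\ {in A, forall a, (f a \in B) && adj a (f a)}.

Lemma nbhd_sub B X : nbhd B X \subset B.
Proof. by apply/subsetP=> b; rewrite inE => /andP[]. Qed.

Lemma nbhdDl B B' X : nbhd (B :\: B') X = nbhd B X :\: B'.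
Proof. by apply/setP=> b; rewrite !inE andbA. Qed.

Lemma nbhdUr B X Y : nbhd B (X :|: Y) = nbhd B X :|: nbhd B Y.
Proof.
apply/setP=> b; rewrite !inE -andb_orr; congr (_ && _).
apply/existsP/orP=> [[a /andP[]]|[]/existsP[a /andP[aZ ab]]].
- by rewrite inE => /orP[] aZ ab; [left|right]; apply/existsP; exists a; rewrite aZ.
- by exists a; rewrite inE aZ ?orbT.
- by exists a; rewrite inE aZ ?orbT.
Qed.

Lemma hall_condS A A' B : A' \subset A -> hall_cond A B -> hall_cond A' B.
Proof. by move=> sA'A hAB X sXA'; apply/hAB/(subset_trans sXA'). Qed.

Lemma hall_condD A B X : X \subset A -> #|nbhd B X| <= #|X| ->
  hall_cond A B -> hall_cond (A :\: X) (B :\: nbhd B X).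
Proof.
move=> sXA tightX hAB Y sYAX; rewrite nbhdDl.
have sYXA : Y :|: X \subset A by rewrite subUset sXA (subset_trans sYAX) ?subsetDl.
have disjYX : Y :&: X = set0.
  apply/setP=> a; rewrite !inE; apply/negbTE/andP=> -[/(subsetP sYAX)].
  by rewrite inE => /andP[/negbTE->].
have := hAB _ sYXA; rewrite nbhdUr !cardsU disjYX cards0 cardsD.
have := subset_leq_card (subsetIl (nbhd B Y) (nbhd B X)).
lia.
Qed.

Lemma hall_condD1 A B a b : a \in A ->
  (forall X, X \subset A -> X != set0 -> X != A -> #|X| < #|nbhd B X|) ->
  hall_cond (A :\ a) (B :\ b).
Proof.
move=> aA slackA Y sYAa; rewrite nbhdDl.
have [->|Y0] := eqVneq Y set0; first by rewrite cards0.
have sYA : Y \subset A := subset_trans sYAa (subsetDl _ _).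
have YA : Y != A.
  by apply: contraTneq sYAa => ->; apply/subsetPn; exists a; rewrite ?inE ?eqxx.
have := slackA Y sYA Y0 YA; rewrite (cardsD1 b (nbhd B Y)); case: (_ \in _); lia.
Qed.

Lemma matchingS f A B B' : B \subset B' -> matching f A B -> matching f A B'.
Proof.
move=> sBB' [injf fP]; split=> // a /fP /andP[fB ->].
by rewrite (subsetP sBB').
Qed.

Lemma matching_nbhd f X B : matching f X B -> matching f X (nbhd B X).
Proof.
move=> [injf fP]; split=> // a aX; have /andP[fB adjf] := fP a aX.
by rewrite inE fB adjf andbT; apply/existsP; exists a; rewrite aX.
Qed.

Lemma matching_splice f1 f2 A X B1 B2 : X \subset A -> [disjoint B1 & B2] ->
  matching f1 X B1 -> matching f2 (A :\: X) B2 ->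
  matching (fun a => if a \in X then f1 a else f2 a) A (B1 :|: B2).
Proof.
move=> sXA disjB [inj1 f1P] [inj2 f2P].
have inAX a : a \in A -> a \notin X -> a \in A :\: X by rewrite inE => -> ->.
have apart x y : x \in X -> y \in A :\: X -> f1 x != f2 y.
  move=> /f1P /andP[f1B _] /f2P /andP[f2B _].
  by apply: contraTneq f1B => ->; rewrite (disjointFl disjB).
split=> [x y xA yA|a aA].
  case: ifP => xX; case: ifP => yX.
  - exact: inj1.
  - by move/eqP; rewrite (negbTE (apart _ _ xX (inAX _ yA (negbT yX)))).
  - by move/eqP; rewrite eq_sym (negbTE (apart _ _ yX (inAX _ xA (negbT xX)))).
  - by apply: inj2; apply: inAX; rewrite ?xX ?yX.
case: ifP => aX.
  by have /andP[f1B ->] := f1P a aX; rewrite inE f1B.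
by have /andP[f2B ->] := f2P a (inAX _ aA (negbT aX)); rewrite inE f2B orbT.
Qed.

(* Halmos and Vaughan's induction: split A along a tight subset if there is
   one, otherwise every proper subset has a surplus of neighbours and any
   edge can be matched first.  [b0] is the junk value of f off A. *)
Theorem hall (b0 : TB) A B : hall_cond A B -> exists f, matching f A B.
Proof.
elim: {A}_.+1 {-2}A (ltnSn #|A|) B => // m IH A ltAm B hAB.
have [->|/set0Pn[a aA]] := eqVneq A set0.
  by exists (fun=> b0); split=> a; rewrite inE.
pose tight X := [&& X \subset A, X != set0, X != A & #|nbhd B X| <= #|X|].
have [/existsP[X /and4P[sXA X0 XA tightX]]|slackA] := boolP [exists X, tight X].
  have ltXA : #|X| < #|A| by rewrite proper_card // properEneq XA.
  have ltAXA : #|A :\: X| < #|A|.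
    by rewrite cardsDS //; move: X0 ltXA; rewrite -card_gt0; lia.
  have [f1 /matching_nbhd match1] := IH X (leq_trans ltXA ltAm) B (hall_condS sXA hAB).
  have [f2 match2] := IH _ (leq_trans ltAXA ltAm) _ (hall_condD sXA tightX hAB).
  exists (fun a => if a \in X then f1 a else f2 a).
  apply: matchingS (matching_splice sXA _ match1 match2).
    by rewrite subUset nbhd_sub subsetDl.
  by rewrite disjoints_subset setCD subsetUr.
have slack X : X \subset A -> X != set0 -> X != A -> #|X| < #|nbhd B X|.
  by move=> sXA X0 XA; move/existsPn/(_ X): slackA; rewrite /tight sXA X0 XA ltnNge.
have /card_gt0P[b] : 0 < #|nbhd B [set a]|.
  by apply: leq_trans (hAB _ _); rewrite ?cards1 ?sub1set.
rewrite inE => /andP[bB /existsP[a' /andP[/set1P-> adj_ab]]].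
have match1 : matching (fun=> b) [set a] [set b].
  by split=> [x y /set1P-> /set1P->|x /set1P->] //; rewrite set11.
have [f2 match2] := IH _ (leq_trans (proper_card (properD1 aA)) ltAm) _
  (hall_condD1 b aA slack).
exists (fun x => if x \in [set a] then b else f2 x).
apply: matchingS (matching_splice _ _ match1 match2).
- by rewrite subUset sub1set bB subsetDl.
- by rewrite sub1set.
- by rewrite disjoints1 !inE eqxx.
Qed.

Lemma sum_card_adj X (Y : {set TB}) :
  \sum_(a in X) #|[set b in Y | adj a b]| = \sum_(b in Y) #|[set a in X | adj a b]|.
Proof.
under eq_bigr do rewrite -sum1dep_card big_mkcondr.
rewrite exchange_big /=; apply: eq_bigr => b _.
by rewrite -sum1dep_card big_mkcondr.
Qed.

Lemma hall_cond_regular d A B : 0 < d ->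
  {in A, forall a, d <= #|[set b in B | adj a b]|} ->
  {in B, forall b, #|[set a in A | adj a b]| <= d} ->
  hall_cond A B.
Proof.
move=> d_gt0 degA degB X sXA; rewrite -(leq_pmul2r d_gt0) -!sum_nat_const.
have nbhdX a : a \in X -> [set b in nbhd B X | adj a b] = [set b in B | adj a b].
  move=> aX; apply/setP=> b; rewrite !inE -andbA.
  case ab: (adj a b); rewrite ?andbF // !andbT andb_idr // => _.
  by apply/existsP; exists a; rewrite aX.
apply: (@leq_trans (\sum_(a in X) #|[set b in nbhd B X | adj a b]|)).
  by apply: leq_sum => a aX; rewrite nbhdX // degA // (subsetP sXA).
rewrite sum_card_adj; apply: leq_sum => b bN.
apply: leq_trans (degB b (subsetP (nbhd_sub B X) b bN)).
apply/subset_leq_card/subsetP=> a; rewrite !inE => /andP[/(subsetP sXA) -> ->] //.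
Qed.

Lemma hall_cond_dense d A B : #|A| <= #|B| -> d.*2 <= #|B| ->
  {in A, forall a, #|[set b in B | ~~ adj a b]| <= d} ->
  {in B, forall b, #|[set a in A | ~~ adj a b]| <= d} ->
  hall_cond A B.
Proof.
move=> leAB le2dB nonA nonB X sXA.
have [->|/set0Pn[a aX]] := eqVneq X set0; first by rewrite cards0.
have [smallX|bigX] := leqP #|X| (#|B| - d).
  have sNaNX : [set b in B | adj a b] \subset nbhd B X.
    apply/subsetP=> b; rewrite !inE => /andP[-> ab] /=.
    by apply/existsP; exists a; rewrite aX.
  apply: leq_trans smallX (leq_trans _ (subset_leq_card sNaNX)).
  have := cardsID [set b | adj a b] B; rewrite -setIdE.
  have -> : B :\: [set b | adj a b] = [set b in B | ~~ adj a b].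
    by apply/setP=> b; rewrite !inE andbC.
  by have := nonA a (subsetP sXA a aX); lia.
have sBNX : B \subset nbhd B X.
  apply/subsetP=> b bB; rewrite inE bB /=; apply/existsP.
  have /subsetPn[a' a'X] : ~~ (X \subset [set a in A | ~~ adj a b]).
    by apply: contraTN bigX => /subset_leq_card leXnon; have := nonB b bB; lia.
  by rewrite !inE (subsetP sXA a' a'X) negbK /= => adj_a'b; exists a'; rewrite a'X.
by apply: leq_trans (subset_leq_card sBNX); rewrite (leq_trans (subset_leq_card sXA)).
Qed.

End Hall.

Lemma card_some_range (T U : finType) (g : T -> option U) :
  #|[set u | [exists x, g x == Some u]]| <= #|[set x | g x != None]|.
Proof.
rewrite -(card_imset _ (@Some_inj _)); apply: leq_trans (leq_imset_card g _).
apply/subset_leq_card/subsetP=> _ /imsetP[u /[!inE] /existsP[x /eqP gx] ->].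
by apply/imsetP; exists x; rewrite ?inE gx.
Qed.

Lemma card_set_neg (T : finType) (p : pred T) :
  #|[set x | ~~ p x]| = #|T| - #|[set x | p x]|.
Proof. by rewrite cardsCs; congr (_ - _); apply: eq_card => x; rewrite !inE negbK. Qed.


Section PartialLatin.
Variables (n : nat) (Q : parray n).

Definition in_row i k := [exists j, Q (i, j) == Some k].
Definition in_col j k := [exists i, Q (i, j) == Some k].
Definition row_lacks i k := ~~ in_row i k.

Definition full_or_empty_cols :=
  forall j, (forall i, Q (i, j) != None) \/ (forall i, Q (i, j) = None).

Definition incomplete_cols := [set j | [exists i, Q (i, j) == None]].

Lemma card_row_symbols i : #|[set k | in_row i k]| <= #|[set j | Q (i, j) != None]|.
Proof. exact: (card_some_range (fun j => Q (i, j))). Qed.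

Lemma card_col_symbols j : #|[set k | in_col j k]| <= #|[set i | Q (i, j) != None]|.
Proof. exact: (card_some_range (fun i => Q (i, j))). Qed.

Hypothesis PLS_Q : is_PLS Q.

Lemma card_rows_with_symbol k : #|[set i | in_row i k]| = #|[set j | in_col j k]|.
Proof.
have [uniq_row uniq_col] := PLS_Q.
pose S := [set c | Q c == Some k].
have -> : [set i | in_row i k] = fst @: S.
  apply/setP=> i; rewrite inE; apply/existsP/imsetP => [[j Qij]|[[i' j] Qc ->]].
    by exists (i, j); rewrite ?inE.
  by exists j; rewrite inE in Qc.
have -> : [set j | in_col j k] = snd @: S.
  apply/setP=> j; rewrite inE; apply/existsP/imsetP => [[i Qij]|[[i j'] Qc ->]].
    by exists (i, j); rewrite ?inE.
  by exists i; rewrite inE in Qc.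
rewrite !card_in_imset // => -[i1 j1] [i2 j2]; rewrite !inE => /eqP Q1 /eqP Q2 /= e.
  by rewrite e in Q1 *; rewrite (uniq_col _ _ _ _ Q1 Q2).
by rewrite e in Q1 *; rewrite (uniq_row _ _ _ _ Q1 Q2).
Qed.

Lemma full_col_in_col j k : (forall i, Q (i, j) != None) -> in_col j k.
Proof.
have [_ uniq_col] := PLS_Q; move=> full_j.
pose g i := odflt k (Q (i, j)).
have inj_g : injective g.
  move=> i1 i2; rewrite /g; move: (full_j i1) (full_j i2).
  case Q1: (Q (i1, j)) => [k1|] // _; case Q2: (Q (i2, j)) => [k2|] // _ /= e.
  by rewrite e in Q1; exact: uniq_col Q1 Q2.
have /codomP[i ->] := injF_onto inj_g k.
by apply/existsP; exists i; rewrite /g; move: (full_j i); case: (Q (i, j)).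
Qed.

End PartialLatin.

Definition fill_col n (Q : parray n) j (f : 'I_n -> 'I_n) : parray n :=
  [ffun c => if (c.2 == j) && (Q c == None) then Some (f c.1) else Q c].

Section FillColumn.
Variables (n : nat) (Q : parray n) (j : 'I_n) (f : 'I_n -> 'I_n).

Lemma fill_col_ext c k : Q c = Some k -> fill_col Q j f c = Some k.
Proof. by move=> Qc; rewrite ffunE Qc andbF. Qed.

Lemma fill_col_full i : fill_col Q j f (i, j) != None.
Proof. by rewrite ffunE eqxx /=; case: (Q (i, j)). Qed.

Lemma fill_col_other i j' : j' != j -> fill_col Q j f (i, j') = Q (i, j').
Proof. by move=> /negbTE j'j; rewrite ffunE /= j'j. Qed.

Lemma fill_colP i j' k : fill_col Q j f (i, j') = Some k ->
  Q (i, j') = Some k \/ [/\ j' = j, Q (i, j) = None & f i = k].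
Proof.
rewrite ffunE /=; case: eqP => [->|_] /=; last by left.
by case: (Q (i, j)) => [k'|] /=; [left | move=> [] <-; right].
Qed.

Lemma completable_fill_col : completable (fill_col Q j f) -> completable Q.
Proof. by move=> [L [LS_L extL]]; exists L; split=> // c k /fill_col_ext /extL. Qed.

Lemma incomplete_cols_fill : incomplete_cols (fill_col Q j f) = incomplete_cols Q :\ j.
Proof.
apply/setP=> j'; rewrite !inE; have [->|j'j] /= := eqVneq j' j.
  by apply/negbTE/existsPn=> i; rewrite fill_col_full.
by under eq_existsb do rewrite fill_col_other //.
Qed.

Lemma full_or_empty_cols_fill :
  full_or_empty_cols Q -> full_or_empty_cols (fill_col Q j f).
Proof.
move=> fe j'; have [->|j'j] := eqVneq j' j; first by left=> i; apply: fill_col_full.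
by case: (fe j') => h; [left | right] => i; rewrite fill_col_other.
Qed.

Lemma fill_col_PLS : is_PLS Q ->
  matching (row_lacks Q) f [set i | Q (i, j) == None] [set k | ~~ in_col Q j k] ->
  is_PLS (fill_col Q j f).
Proof.
move=> [uniq_row uniq_col] [inj_f f_ok].
have f_okP i : Q (i, j) = None -> ~~ in_col Q j (f i) /\ ~~ in_row Q i (f i).
  move=> Qij; have iA : i \in [set i | Q (i, j) == None] by rewrite inE Qij.
  by have /andP[] := f_ok i iA; rewrite inE.
split.
  have mixed i j1 k : Q (i, j1) = Some k -> Q (i, j) = None -> f i = k -> False.
    move=> Q1 Qij fik; have [_ /existsPn/(_ j1)] := f_okP i Qij.
    by rewrite fik Q1 eqxx.
  move=> i j1 j2 k /fill_colP[Q1|[-> Q1 f1]] /fill_colP[Q2|[-> Q2 f2]] //.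
  - exact: uniq_row Q1 Q2.
  - by case: (mixed _ _ _ Q1 Q2 f2).
  - by case: (mixed _ _ _ Q2 Q1 f1).
have mixed i1 i2 k : Q (i2, j) = Some k -> Q (i1, j) = None -> f i1 = k -> False.
  move=> Q2 Q1 fik; have [/existsPn/(_ i2)] := f_okP i1 Q1.
  by rewrite fik Q2 eqxx.
move=> i1 i2 j' k /fill_colP[Q1|[-> Q1 f1]] /fill_colP[Q2|[e Q2 f2]].
- exact: uniq_col Q1 Q2.
- by rewrite e in Q1; case: (mixed _ _ _ Q1 Q2 f2).
- by case: (mixed _ _ _ Q2 Q1 f1).
- by apply: inj_f; rewrite ?inE ?Q1 ?Q2 // f1 f2.
Qed.

End FillColumn.

Lemma fill_empty_col_PLS n (Q : parray n) j : is_PLS Q -> full_or_empty_cols Q ->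
  (forall i, Q (i, j) = None) -> exists f, is_PLS (fill_col Q j f).
Proof.
move=> PLS_Q fe empty_j.
pose F := [set j' | [forall i, Q (i, j') != None]].
have ltFn : #|F| < n.
  have: F \subset [set~ j].
    apply/subsetP=> j'; rewrite !inE; apply: contraTneq => ->.
    by apply/forallPn; exists j; rewrite empty_j.
  move/subset_leq_card; rewrite cardsC1 card_ord; have := ltn_ord j; lia.
have filled_sub_F i : [set j' | Q (i, j') != None] \subset F.
  apply/subsetP=> j'; rewrite !inE => Qij'; apply/forallP=> i'.
  by case: (fe j') => [|empty_j']; last rewrite empty_j' in Qij'.
have hallQ :
    hall_cond (row_lacks Q) [set i | Q (i, j) == None] [set k | ~~ in_col Q j k].
  have -> : [set i | Q (i, j) == None] = setT by apply/setP=> i; rewrite !inE empty_j.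
  have -> : [set k | ~~ in_col Q j k] = setT.
    by apply/setP=> k; rewrite !inE; apply/existsPn=> i; rewrite empty_j.
  apply: (@hall_cond_regular _ _ _ (n - #|F|)); first by rewrite subn_gt0.
  - move=> i _; rewrite setIdE setTI card_set_neg card_ord leq_sub2l //.
    exact: leq_trans (card_row_symbols Q i) (subset_leq_card (filled_sub_F i)).
  - move=> k _; rewrite setIdE setTI card_set_neg card_ord leq_sub2l //.
    rewrite card_rows_with_symbol //; apply/subset_leq_card/subsetP=> j'.
    by rewrite !inE => /forallP full_j'; apply: full_col_in_col.
have [f match_f] := hall j hallQ.
by exists f; apply: fill_col_PLS.
Qed.

Lemma latin_rectangle_completable n (Q : parray n) :
  is_PLS Q -> full_or_empty_cols Q -> completable Q.
Proof.
move card_m: #|incomplete_cols Q| => m.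
elim: m Q card_m => [|m IH] Q card_m PLS_Q fe.
  exists Q; split=> //; split=> // -[i j].
  move: card_m => /eqP; rewrite cards_eq0 => /eqP /setP /(_ j).
  by rewrite !inE => /negbT /existsPn /(_ i).
have /card_gt0P[j j_inc] : 0 < #|incomplete_cols Q| by rewrite card_m.
have empty_j : forall i, Q (i, j) = None.
  move: j_inc; rewrite inE => /existsP[i0 /eqP Qi0j].
  by case: (fe j) => // full_j; move: (full_j i0); rewrite Qi0j.
have [f PLS_fill] := fill_empty_col_PLS PLS_Q fe empty_j.
apply: (completable_fill_col (j := j) (f := f)).
apply: IH PLS_fill (full_or_empty_cols_fill _ _ fe).
by move: card_m; rewrite incomplete_cols_fill (cardsD1 j) j_inc => -[].
Qed.

Section OnePartialColumn.
Variables (n r s : nat) (P : parray n) (C : {set 'I_n}) (j0 : 'I_n).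
Hypotheses (PLS_P : is_PLS P) (card_C : #|C| = r).
Hypotheses (filled_j0 : col_filled P j0 = s) (n_large : 2 * r + s <= n).
Hypothesis empty_rest : forall j, j \notin C -> j != j0 -> forall i, P (i, j) = None.

Lemma filled_col_in_C i j : P (i, j) != None -> j != j0 -> j \in C.
Proof. by move=> Pij jj0; apply: contraNT Pij => jC; rewrite empty_rest. Qed.

Lemma hall_cond_partial_col :
  hall_cond (row_lacks P) [set i | P (i, j0) == None] [set k | ~~ in_col P j0 k].
Proof.
have cardA : #|[set i | P (i, j0) == None]| = n - s.
  rewrite -filled_j0 cardsCs card_ord; congr (_ - _).
  by apply: eq_card => i; rewrite !inE.
have cardB : n - s <= #|[set k | ~~ in_col P j0 k]|.
  by rewrite card_set_neg card_ord leq_sub2l // -filled_j0 card_col_symbols.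
apply: (@hall_cond_dense _ _ _ r); rewrite ?cardA //; first by lia.
- move=> i; rewrite inE => /eqP Pij0.
  have sub : [set k in [set k | ~~ in_col P j0 k] | ~~ row_lacks P i k]
      \subset [set k | in_row P i k].
    by apply/subsetP=> k; rewrite !inE /row_lacks negbK => /andP[].
  apply: leq_trans (subset_leq_card sub) (leq_trans (card_row_symbols P i) _).
  rewrite -card_C; apply/subset_leq_card/subsetP=> j; rewrite inE => Pij.
  have jj0 : j != j0 by apply: contraTneq Pij => ->; rewrite Pij0.
  exact: filled_col_in_C Pij jj0.
- move=> k; rewrite inE => k_notin_j0.
  have sub : [set i in [set i | P (i, j0) == None] | ~~ row_lacks P i k]
      \subset [set i | in_row P i k].
    by apply/subsetP=> i; rewrite !inE /row_lacks negbK => /andP[].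
  apply: leq_trans (subset_leq_card sub) _; rewrite card_rows_with_symbol // -card_C.
  apply/subset_leq_card/subsetP=> j; rewrite inE => /existsP[i /eqP Pijk].
  apply: (@filled_col_in_C i); first by rewrite Pijk.
  by apply: contraNneq k_notin_j0 => <-; apply/existsP; exists i; rewrite Pijk.
Qed.

End OnePartialColumn.

Theorem lemma2 (n r s : nat) (P : parray n) (C : {set 'I_n}) (j0 : 'I_n) :
  is_PLS P ->
  #|C| = r ->
  (forall j, j \in C -> forall i, P (i, j) != None) ->
  j0 \notin C ->
  col_filled P j0 = s ->
  (forall j, j \notin C -> j != j0 -> forall i, P (i, j) = None) ->
  2 * r + s <= n ->
  completable P.
Proof.
move=> PLS_P card_C full_C _ filled_j0 empty_rest n_large.
have := hall_cond_partial_col PLS_P card_C filled_j0 n_large empty_rest.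
move=> /(hall j0) [f match_f].
apply: (completable_fill_col (j := j0) (f := f)).
apply: latin_rectangle_completable; first exact: fill_col_PLS.
move=> j; have [->|jj0] := eqVneq j j0; first by left=> i; apply: fill_col_full.
have [jC|jC] := boolP (j \in C); [left | right] => i; rewrite fill_col_other //.
- exact: full_C.
- exact: empty_rest.
Qed.
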